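(* Let $D\subseteq\mathbb{R}^n$ be nonempty, convex, closed and bounded, and let $f:\mathbb{R}^n\to\mathbb{R}$ be continuously differentiable. Consider Method (CGMI) (described in the context). Then: (i) the number of changes of the index $k$ at each stage $p$ is finite, so the sequence $\{w^p\}_{p\ge0}$ is infinite; (ii) the sequence $\{w^p\}$ has limit points, and all of them belong to $D^0$; (iii) if, in addition, $f$ is pseudo-convex on $D$, then all limit points of $\{w^p\}$ belong to $D^*$, and $\lim_{p\to\infty}f(w^p)=f^*$.
   Context: Notation: $f'(x)$ is the gradient of $f$; $\mathbb{Z}_+$ is the set of non-negative integers. The problem is $\min_{x\in D}f(x)$; $f^*=\inf_{x\in D}f(x)$ and $D^*$ is its solution set. $D^0$ is the set of $x^*\in D$ with $\langle f'(x^* ),x-x^*\rangle\ge0$ for all $x\in D$. $\mu(x)=\max_{y\in D}\langle f'(x),x-y\rangle$. A differentiable $\varphi$ is pseudo-convex on $D$ if for all $x,y\in D$, $\langle\varphi'(x),y-x\rangle\ge0$ implies $\varphi(y)\ge\varphi(x)$. Method (CGMI): Choose $w^0\in D$, $\beta\in(0,1)$, $\theta\in(0,1)$, and a positive sequence $\{\delta_p\}$ with $\delta_p\to0$. Set $p=1$. (Step 0) Set $k=0$, $x^0=w^{p-1}$. (Step 1) If $\mu(x^k)<\delta_p$, set $w^p=x^k$, replace $p$ by $p+1$ and go to Step 0 (restart). Otherwise choose any $z^k\in D$ with $\langle f'(x^k),x^k-z^k\rangle\ge\delta_p$. (Step 2) Set $d^k=z^k-x^k$, let $m$ be the smallest number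 in $\mathbb{Z}_+$ with $f(x^k+\theta^m d^k)\le f(x^k)+\beta\theta^m\langle f'(x^k),d^k\rangle$, set $\lambda_k=\theta^m$, $x^{k+1}=x^k+\lambda_k d^k$, $k=k+1$, and go to Step 1. The iterations with a fixed value of $p$ form stage $p$. *)

From mathcomp Require Import all_boot.
From Stdlib Require Import Reals ClassicalEpsilon.

Open Scope R_scope.

Definition vec (n : nat) := 'I_n -> R.

Definition vadd {n} (x y : vec n) : vec n := fun i => x i + y i.
Definition vsub {n} (x y : vec n) : vec n := fun i => x i - y i.
Definition vscale {n} (a : R) (x : vec n) : vec n := fun i => a * x i.

Definition dot {n} (x y : vec n) : R := \big[Rplus/R0]_(i < n) (x i * y i).
Definition vnorm {n} (x : vec n) : R := sqrt (dot x x).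

Definition convex_vset {n} (D : vec n -> Prop) : Prop :=
  forall x y t, D x -> D y -> 0 <= t <= 1 -> D (vadd x (vscale t (vsub y x))).
Definition closed_vset {n} (D : vec n -> Prop) : Prop :=
  forall x, (forall eps, 0 < eps -> exists y, D y /\ vnorm (vsub y x) < eps) -> D x.
Definition bounded_vset {n} (D : vec n -> Prop) : Prop :=
  exists M, forall x, D x -> vnorm x <= M.

Definition has_gradient {n} (f : vec n -> R) (g : vec n -> vec n) : Prop :=
  forall x eps, 0 < eps -> exists eta, 0 < eta /\
    forall y, vnorm (vsub y x) < eta ->
      Rabs (f y - f x - dot (g x) (vsub y x)) <= eps * vnorm (vsub y x).
Definition continuous_map {n m} (g : vec n -> vec m) : Prop :=
  forall x eps, 0 < eps -> exists eta, 0 < eta /\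
    forall y, vnorm (vsub y x) < eta -> vnorm (vsub (g y) (g x)) < eps.
Definition C1_with_gradient {n} (f : vec n -> R) (g : vec n -> vec n) : Prop :=
  has_gradient f g /\ continuous_map g.

(* mu(x) = max_{y in D} <f'(x), x - y>  (chosen by epsilon; the max exists
   under the standing hypotheses: D nonempty compact) *)
Definition is_max_of {n} (D : vec n -> Prop) (g : vec n -> vec n) (x : vec n) (m : R) : Prop :=
  (exists y, D y /\ m = dot (g x) (vsub x y)) /\
  (forall y, D y -> dot (g x) (vsub x y) <= m).
Definition mu {n} (D : vec n -> Prop) (g : vec n -> vec n) (x : vec n) : R :=
  epsilon (inhabits R0) (is_max_of D g x).

Definition D0 {n} (D : vec n -> Prop) (g : vec n -> vec n) (x : vec n) : Prop :=
  D x /\ forall y, D y -> 0 <= dot (g x) (vsub y x).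
Definition Dstar {n} (D : vec n -> Prop) (f : vec n -> R) (x : vec n) : Prop :=
  D x /\ forall y, D y -> f x <= f y.
Definition is_inf_on {n} (D : vec n -> Prop) (f : vec n -> R) (l : R) : Prop :=
  (forall x, D x -> l <= f x) /\
  (forall m, (forall x, D x -> m <= f x) -> m <= l).

Definition pseudo_convex_on {n} (D : vec n -> Prop) (phi : vec n -> R)
    (phi' : vec n -> vec n) : Prop :=
  forall x y, D x -> D y -> 0 <= dot (phi' x) (vsub y x) -> phi x <= phi y.

Definition armijo {n} (f : vec n -> R) (g : vec n -> vec n) (beta theta : R)
    (x d : vec n) (m : nat) : Prop :=
  f (vadd x (vscale (theta ^ m) d)) <= f x + beta * theta ^ m * dot (g x) d.

(* One change of the index k inside a stage with tolerance delta:
   Step 1 (mu(x) >= delta, choice of any admissible z) followed by Step 2. *)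
Definition cgmi_step {n} (D : vec n -> Prop) (f : vec n -> R) (g : vec n -> vec n)
    (beta theta delta : R) (x x' : vec n) : Prop :=
  delta <= mu D g x /\
  exists z, D z /\ delta <= dot (g x) (vsub x z) /\
    exists m : nat,
      armijo f g beta theta x (vsub z x) m /\
      (forall m', lt m' m -> ~ armijo f g beta theta x (vsub z x) m') /\
      x' = vadd x (vscale (theta ^ m) (vsub z x)).

(* A complete stage with tolerance delta started at x = w^{p-1} and ending
   (restart) at y = w^p: finitely many steps, then mu(y) < delta. *)
Definition cgmi_stage {n} (D : vec n -> Prop) (f : vec n -> R) (g : vec n -> vec n)
    (beta theta delta : R) (x y : vec n) : Prop :=
  exists (K : nat) (xs : nat -> vec n),
    xs O = x /\ xs K = y /\
    (forall k, lt k K -> cgmi_step D f g beta theta delta (xs k) (xs (S k))) /\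
    mu D g y < delta.

Definition limit_point {n} (w : nat -> vec n) (x : vec n) : Prop :=
  forall eps, 0 < eps -> forall N : nat, exists p : nat, le N p /\ vnorm (vsub (w p) x) < eps.

From HB Require Import structures.
From mathcomp Require Import all_boot.
From Stdlib Require Import Reals Lra Psatz Wf_nat.
From Stdlib Require Import ClassicalEpsilon Classical FunctionalExtensionality.
Open Scope R_scope.

(* Compactness of [D] and uniform continuity of [f'] on it give, for each tolerance
   [delta], a uniform Armijo step [tau]: every step of a stage lowers [f] by at least
   [beta * theta * tau * delta].  Since [f] is bounded below on [D], every stage is
   finite.  At the end of stage [p] we have [mu (w p) < delta], and by continuity of
   [x |-> <f'(x), x - y>] this passes to the limit points, which are therefore
   stationary; pseudo-convexity turns stationary points into minimizers, and the
   nonincreasing values [f (w p)] converge to the value at a limit point. *)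

HB.instance Definition _ := Monoid.isComLaw.Build R R0 Rplus
  (fun x y z => esym (Rplus_assoc x y z)) Rplus_comm Rplus_0_l.

Ltac vext := apply: functional_extensionality => i; rewrite /vsub /vadd /vscale; ring.

Section Euclidean.
Context {n : nat}.
Implicit Types (x y z : vec n) (a : R).

Lemma big_Rplus_ge0 (F : 'I_n -> R) (P : pred 'I_n) :
  (forall i, 0 <= F i) -> 0 <= \big[Rplus/R0]_(i < n | P i) F i.
Proof. by move=> F0; elim/big_ind: _ => // [|a b]; lra. Qed.

Lemma dot_comm x y : dot x y = dot y x.
Proof. by rewrite /dot; apply: eq_bigr => i _; rewrite Rmult_comm. Qed.

Lemma dot_addl x y z : dot (vadd x y) z = dot x z + dot y z.
Proof. by rewrite /dot -big_split; apply: eq_bigr => i _; rewrite /vadd /=; ring. Qed.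

Lemma dot_scalel a x y : dot (vscale a x) y = a * dot x y.
Proof.
rewrite /dot; elim/big_rec2: _ => [|i b c _ ->]; first ring.
by rewrite /vscale; ring.
Qed.

Lemma dot_subl x y z : dot (vsub x y) z = dot x z - dot y z.
Proof.
have -> : vsub x y = vadd x (vscale (-1) y) by vext.
by rewrite dot_addl dot_scalel; ring.
Qed.

Lemma dot_scaler a x y : dot x (vscale a y) = a * dot x y.
Proof. by rewrite dot_comm dot_scalel dot_comm. Qed.

Lemma dot_subr x y z : dot x (vsub y z) = dot x y - dot x z.
Proof. by rewrite dot_comm dot_subl !(dot_comm x). Qed.

Lemma sqr_coord_le_dot x i : x i * x i <= dot x x.
Proof.
rewrite /dot (bigD1 i) //= -{1}(Rplus_0_r (x i * x i)).
by apply/Rplus_le_compat_l/big_Rplus_ge0 => j; nra.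
Qed.

Lemma dot_self_ge0 x : 0 <= dot x x.
Proof. by rewrite /dot; apply: big_Rplus_ge0 => i; nra. Qed.

Lemma dot_self_eq0 x y : dot x x = 0 -> dot x y = 0.
Proof.
move=> x0; rewrite /dot big1 // => i _.
have := sqr_coord_le_dot x i; rewrite x0 => xi2.
have -> : x i = 0 by apply: Rsqr_0_uniq; have := Rle_0_sqr (x i); rewrite /Rsqr; lra.
exact: Rmult_0_l.
Qed.

Lemma vnorm_ge0 x : 0 <= vnorm x.
Proof. exact: sqrt_pos. Qed.

Lemma vnorm_sqr x : vnorm x * vnorm x = dot x x.
Proof. exact/sqrt_sqrt/dot_self_ge0. Qed.

(* Expand [0 <= |<y,y> x - <x,y> y|^2 = <y,y> (<x,x><y,y> - <x,y>^2)]. *)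
Lemma Cauchy_Schwarz_sqr x y : dot x y * dot x y <= dot x x * dot y y.
Proof.
have yy0 := dot_self_ge0 y.
have [yy_eq0 | yy_neq0] := Req_dec (dot y y) 0.
  by rewrite dot_comm (dot_self_eq0 _ _ yy_eq0) yy_eq0; lra.
have := dot_self_ge0 (vsub (vscale (dot y y) x) (vscale (dot x y) y)).
rewrite !(dot_subl, dot_subr, dot_scalel, dot_scaler) (dot_comm y x) => H.
have yy_gt0 : 0 < dot y y by lra.
nra.
Qed.

Lemma Cauchy_Schwarz x y : Rabs (dot x y) <= vnorm x * vnorm y.
Proof.
have := Cauchy_Schwarz_sqr x y; rewrite -!vnorm_sqr => H.
have := Rmult_le_pos _ _ (vnorm_ge0 x) (vnorm_ge0 y) => ?.
by apply: Rabs_le; split; apply: Rnot_lt_le => ?; nra.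
Qed.

Lemma dot_le_vnorm x y : dot x y <= vnorm x * vnorm y.
Proof. exact: Rle_trans (Rle_abs _) (Cauchy_Schwarz x y). Qed.

Lemma vnorm_scale a x : vnorm (vscale a x) = Rabs a * vnorm x.
Proof.
rewrite /vnorm dot_scalel dot_scaler -Rmult_assoc sqrt_mult_alt; last nra.
by rewrite -sqrt_Rsqr_abs.
Qed.

Lemma vnorm_add_le x y : vnorm (vadd x y) <= vnorm x + vnorm y.
Proof.
have := vnorm_sqr (vadd x y); rewrite dot_addl (dot_comm x) (dot_comm y) !dot_addl.
rewrite -(vnorm_sqr x) -(vnorm_sqr y) (dot_comm y x) => H.
have := dot_le_vnorm x y; have := vnorm_ge0 x; have := vnorm_ge0 y.
have := vnorm_ge0 (vadd x y); nra.
Qed.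

Lemma vnorm_subC x y : vnorm (vsub x y) = vnorm (vsub y x).
Proof.
have -> : vsub x y = vscale (-1) (vsub y x) by vext.
by rewrite vnorm_scale Rabs_Ropp Rabs_R1 Rmult_1_l.
Qed.

Lemma vnorm_sub_triangle x y z : vnorm (vsub x z) <= vnorm (vsub x y) + vnorm (vsub y z).
Proof. have -> : vsub x z = vadd (vsub x y) (vsub y z) by vext. exact: vnorm_add_le. Qed.

Lemma vnorm_sub_le x y : vnorm (vsub x y) <= vnorm x + vnorm y.
Proof.
have -> : vsub x y = vadd x (vscale (-1) y) by vext.
by have := vnorm_add_le x (vscale (-1) y); rewrite vnorm_scale Rabs_Ropp Rabs_R1; lra.
Qed.

Lemma Rabs_coord_le x i : Rabs (x i) <= vnorm x.
Proof.
have := sqr_coord_le_dot x i; rewrite -vnorm_sqr => H.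
have := vnorm_ge0 x => ?.
by apply: Rabs_le; split; nra.
Qed.

Lemma dot_self_le_coord_bound x c :
  (forall i, Rabs (x i) <= c) -> dot x x <= INR n * (c * c).
Proof.
move=> xc; have iter_Rplus k : iter k (Rplus (c * c)) 0 = INR k * (c * c).
  by elim: k => [|k IH]; rewrite ?S_INR /= ?IH; ring.
rewrite -iter_Rplus -big_const_ord /dot.
elim/big_ind2: _ => [|a b a' b'|i _]; [lra | lra |].
have := Rsqr_abs (x i); rewrite /Rsqr => ->.
by have := xc i; have := Rabs_pos (x i); nra.
Qed.
End Euclidean.

Definition strictly_increasing (phi : nat -> nat) := forall k, (phi k < phi k.+1)%coq_nat.

Lemma strictly_increasing_le phi a b :
  strictly_increasing phi -> (a <= b)%coq_nat -> (phi a <= phi b)%coq_nat.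
Proof. by move=> phi_incr; elim=> [|c _ IH]; [lia | have := phi_incr c; lia]. Qed.

Lemma strictly_increasing_ge_id phi k : strictly_increasing phi -> (k <= phi k)%coq_nat.
Proof. by move=> phi_incr; elim: k => [|k IH]; [lia | have := phi_incr k; lia]. Qed.

Lemma strictly_increasing_comp phi psi :
  strictly_increasing phi -> strictly_increasing psi -> strictly_increasing (fun k => phi (psi k)).
Proof.
move=> phi_incr psi_incr k.
have := strictly_increasing_le _ _ _ phi_incr (psi_incr k); have := phi_incr (psi k); lia.
Qed.

Lemma Un_cv_subseq u l phi :
  strictly_increasing phi -> Un_cv u l -> Un_cv (fun k => u (phi k)) l.
Proof.
move=> phi_incr u_cv eps eps_gt0; have [N HN] := u_cv eps eps_gt0.
by exists N => k Nk; apply: HN; have := strictly_increasing_ge_id _ k phi_incr; lia.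
Qed.

Lemma nonincreasing_cluster_value_cv (u : nat -> R) l :
  (forall p, u p.+1 <= u p) -> (forall p, l <= u p) ->
  (forall eps, 0 < eps -> exists p, Rabs (u p - l) < eps) -> Un_cv u l.
Proof.
move=> u_decr u_ge u_cluster eps eps_gt0; have [N uN_close] := u_cluster eps eps_gt0.
exists N => p Np; have : u p <= u N by elim: Np => [|q _ IH]; [lra | have := u_decr q; lra].
by rewrite /R_dist; have := u_ge p; move: uN_close; split_Rabs; lra.
Qed.

Lemma inv_INR_succ_lt eps :
  0 < eps -> exists N, forall k, (N <= k)%coq_nat -> / (INR k + 1) < eps.
Proof.
move=> eps_gt0; have [N HN] := INR_archimed eps 1 eps_gt0.
exists N => k Nk; have := le_INR _ _ Nk; have := pos_INR N => ? ?.
apply: (Rmult_lt_reg_r (INR k + 1)); first lra.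
by rewrite Rinv_l; nra.
Qed.

Lemma cluster_value_subseq (u : nat -> R) l :
  (forall eps, 0 < eps -> forall N, exists p, (N <= p)%coq_nat /\ Rabs (u p - l) < eps) ->
  exists phi, strictly_increasing phi /\ Un_cv (fun k => u (phi k)) l.
Proof.
move=> u_cluster.
have [pick pickP] : exists pick : nat * nat -> nat, forall kN,
    (kN.2 <= pick kN)%coq_nat /\ Rabs (u (pick kN) - l) < / (INR kN.1 + 1).
  apply: (ClassicalEpsilon.choice
    (fun kN p => (kN.2 <= p)%coq_nat /\ Rabs (u p - l) < / (INR kN.1 + 1))) => -[k N].
  apply: u_cluster.
  by apply: Rinv_0_lt_compat; have := pos_INR k; rewrite /=; lra.
pose phi := nat_rect (fun _ => nat) (pick (0, 0)%nat) (fun k p => pick (k.+1, p.+1)).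
have phi_close k : Rabs (u (phi k) - l) < / (INR k + 1).
  by case: k => [|k]; [exact: (pickP (0, 0)%nat).2 | exact: (pickP (k.+1, (phi k).+1)).2].
exists phi; split=> [k | eps eps_gt0]; first exact: (pickP (k.+1, (phi k).+1)).1.
have [N HN] := inv_INR_succ_lt eps eps_gt0.
by exists N => k Nk; rewrite /R_dist; have := HN k Nk; have := phi_close k; lra.
Qed.

Lemma bounded_seq_cv_subseq (u : nat -> R) M :
  (forall k, Rabs (u k) <= M) ->
  exists phi l, strictly_increasing phi /\ Un_cv (fun k => u (phi k)) l.
Proof.
move=> u_bd.
have [l l_adh] : exists l, ValAdh u l.
  apply: (Bolzano_Weierstrass u _ (compact_P3 (- M) M)) => k /=.
  by have := u_bd k; split_Rabs; lra.
have [phi phi_cv] : exists phi, strictly_increasing phi /\ Un_cv (fun k => u (phi k)) l.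
  apply: cluster_value_subseq => eps eps_gt0 N.
  apply: (l_adh (fun y => Rabs (y - l) < eps)).
  by exists (mkposreal eps eps_gt0).
by exists phi, l.
Qed.

Section Compactness.
Context {n : nat}.
Implicit Types (D : vec n -> Prop) (u : nat -> vec n).

Lemma bounded_vseq_coord_cv_subseq u M : (forall k i, Rabs (u k i) <= M) ->
  forall m, exists phi (x : vec n), strictly_increasing phi /\
    forall i : 'I_n, (i < m)%coq_nat -> Un_cv (fun k => u (phi k) i) (x i).
Proof.
move=> u_bd; elim=> [|m [phi [x [phi_incr phi_cv]]]].
  by exists (fun k => k), (u O); split=> [k | i]; lia.
have [m_lt_n | m_ge_n] := Compare_dec.lt_dec m n; last first.
  by exists phi, x; split=> // i i_lt; apply: phi_cv; have := ltn_ord i; move/ltP; lia.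
pose im : 'I_n := Ordinal (introT ltP m_lt_n).
have [psi [l [psi_incr psi_cv]]] :=
  bounded_seq_cv_subseq (fun k => u (phi k) im) M (fun k => u_bd _ _).
exists (fun k => phi (psi k)), (fun i => if i == im then l else x i).
split=> [|i i_lt]; first exact: strictly_increasing_comp.
have [-> | i_neq] := eqVneq i im; first exact: psi_cv.
apply: (Un_cv_subseq (fun k => u (phi k) i)) => //.
apply: phi_cv; suff : i <> m :> nat by lia.
by move=> i_eq; move/eqP: i_neq; apply; apply: val_inj.
Qed.

Lemma coord_cv_limit_point u phi (x : vec n) : strictly_increasing phi ->
  (forall i, Un_cv (fun k => u (phi k) i) (x i)) -> limit_point u x.
Proof.
move=> phi_incr u_cv eps eps_gt0 N.
have n_ge0 := pos_INR n.
pose c := eps / (INR n + 1).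
have c_gt0 : 0 < c by apply: Rdiv_lt_0_compat; lra.
pose rank_ok i K := forall k, (K <= k)%coq_nat -> R_dist (u (phi k) i) (x i) < c.
have [K K_cv] : exists K : 'I_n -> nat, forall i, rank_ok i (K i).
  by apply: (ClassicalEpsilon.choice rank_ok) => i; apply: u_cv.
pose k := maxn N (\max_(i < n) K i).
exists (phi k); split.
  exact/(Nat.le_trans _ _ _ _ (strictly_increasing_ge_id _ k phi_incr))/leP/leq_maxl.
have dot_le : dot (vsub (u (phi k)) x) (vsub (u (phi k)) x) <= INR n * (c * c).
  apply: dot_self_le_coord_bound => i; apply/Rlt_le/K_cv.
  by apply/leP; rewrite leq_max (@leq_bigmax _ K i) orbT.
have eps_c : eps = c * (INR n + 1) by rewrite /c; field; lra.
rewrite -vnorm_sqr in dot_le; have := vnorm_ge0 (vsub (u (phi k)) x); nra.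
Qed.

Lemma bounded_vseq_limit_point u M : (forall k, vnorm (u k) <= M) -> exists x, limit_point u x.
Proof.
move=> u_bd.
have [phi [x [phi_incr phi_cv]]] := bounded_vseq_coord_cv_subseq u M
  (fun k i => Rle_trans _ _ _ (Rabs_coord_le _ i) (u_bd k)) n.
exists x; apply: (coord_cv_limit_point _ phi) => // i.
by apply: phi_cv; have /ltP := ltn_ord i.
Qed.

Lemma closed_limit_point D u x :
  closed_vset D -> (forall k, D (u k)) -> limit_point u x -> D x.
Proof.
move=> D_closed uD x_lim; apply: D_closed => eps eps_gt0.
by have [p [_ up_close]] := x_lim eps eps_gt0 O; exists (u p).
Qed.

Lemma compact_limit_point D u : closed_vset D -> bounded_vset D ->
  (forall k, D (u k)) -> exists x, D x /\ limit_point u x.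
Proof.
move=> D_closed [M D_bd] uD.
have [x x_lim] := bounded_vseq_limit_point u M (fun k => D_bd _ (uD k)).
by exists x; split=> //; apply: closed_limit_point x_lim.
Qed.

Lemma bounded_diameter D : bounded_vset D ->
  exists K, 0 < K /\ forall x y, D x -> D y -> vnorm (vsub y x) <= K.
Proof.
move=> [M D_bd]; exists (2 * Rabs M + 1).
split=> [|x y Dx Dy]; first by have := Rabs_pos M; lra.
have := vnorm_sub_le y x; have := D_bd x Dx; have := D_bd y Dy; have := Rle_abs M; lra.
Qed.
End Compactness.

Definition vcontinuous_at {n} (h : vec n -> R) (x : vec n) : Prop :=
  forall eps, 0 < eps -> exists eta, 0 < eta /\
    forall y, vnorm (vsub y x) < eta -> Rabs (h y - h x) < eps.

Section Continuity.
Context {n : nat}.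
Implicit Types (D : vec n -> Prop) (h : vec n -> R) (x y : vec n).

Lemma limit_point_continuous_at h u x : vcontinuous_at h x -> limit_point u x ->
  forall eps, 0 < eps -> forall N, exists p, (N <= p)%coq_nat /\ Rabs (h (u p) - h x) < eps.
Proof.
move=> h_cont x_lim eps eps_gt0 N; have [eta [eta_gt0 h_close]] := h_cont eps eps_gt0.
by have [p [Np up_close]] := x_lim eta eta_gt0 N; exists p; split=> //; apply: h_close.
Qed.

Lemma continuous_bounded_above D h : closed_vset D -> bounded_vset D ->
  (forall x, D x -> vcontinuous_at h x) -> exists M, forall y, D y -> h y <= M.
Proof.
move=> D_closed D_bd h_cont; apply: NNPP => h_unbd.
have [u uP] : exists u : nat -> vec n, forall k, D (u k) /\ INR k < h (u k).
  apply: (ClassicalEpsilon.choice (fun k y => D y /\ INR k < h y)) => k.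
  apply: NNPP => no_y; apply: h_unbd; exists (INR k) => y Dy.
  by apply: Rnot_lt_le => lt_y; apply: no_y; exists y.
have [z [Dz z_lim]] := compact_limit_point D u D_closed D_bd (fun k => (uP k).1).
have [N N_gt] := INR_archimed 1 (h z + 1) Rlt_0_1.
have [p [Np hp_close]] := limit_point_continuous_at h u z (h_cont z Dz) z_lim 1 Rlt_0_1 N.
have := (uP p).2; have := le_INR _ _ Np; move: hp_close; split_Rabs; lra.
Qed.

Theorem extreme_value D h : (exists x, D x) -> closed_vset D -> bounded_vset D ->
  (forall x, D x -> vcontinuous_at h x) -> exists xm, D xm /\ forall y, D y -> h y <= h xm.
Proof.
move=> [x0 Dx0] D_closed D_bd h_cont.
have [M hM] := continuous_bounded_above D h D_closed D_bd h_cont.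
pose values r := exists y, D y /\ r = h y.
have [S [S_ub S_lub]] : {S | is_lub values S}.
  by apply: completeness; [exists M => r [y [Dy ->]]; apply: hM | exists (h x0), x0].
have [u uP] : exists u : nat -> vec n, forall k, D (u k) /\ S - / (INR k + 1) < h (u k).
  apply: (ClassicalEpsilon.choice (fun k y => D y /\ S - / (INR k + 1) < h y)) => k.
  apply: NNPP => no_y.
  have : S <= S - / (INR k + 1).
    apply: S_lub => r [y [Dy ->]].
    by apply: Rnot_lt_le => lt_y; apply: no_y; exists y.
  have : 0 < / (INR k + 1) by apply: Rinv_0_lt_compat; have := pos_INR k; lra.
  lra.
have [z [Dz z_lim]] := compact_limit_point D u D_closed D_bd (fun k => (uP k).1).
have hz_le : h z <= S by apply: S_ub; exists z.
exists z; split=> // y Dy; suff -> : h z = S by apply: S_ub; exists y.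
apply: Rle_antisym => //; apply: Rnot_lt_le => hz_lt; pose e := S - h z.
have [N HN] := inv_INR_succ_lt (e / 2) ltac:(rewrite /e; lra).
have [p [Np hp_close]] :=
  limit_point_continuous_at h u z (h_cont z Dz) z_lim (e / 2) ltac:(rewrite /e; lra) N.
have := HN p Np; have := (uP p).2; move: hp_close; rewrite /e; split_Rabs; lra.
Qed.

Lemma has_gradient_continuous_at f g x : has_gradient f g -> vcontinuous_at f x.
Proof.
move=> f_grad eps eps_gt0.
have [eta [eta_gt0 f_approx]] := f_grad x 1 Rlt_0_1.
have gx_ge0 := vnorm_ge0 (g x).
have eps'_gt0 : 0 < eps / (vnorm (g x) + 1) by apply: Rdiv_lt_0_compat; lra.
exists (Rmin eta (eps / (vnorm (g x) + 1))); split; first exact: Rmin_glb_lt.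
move=> y /Rmin_Rgt_l [y_eta y_eps].
have : vnorm (vsub y x) * (vnorm (g x) + 1) < eps.
  have := vnorm_ge0 (vsub y x); have : eps / (vnorm (g x) + 1) * (vnorm (g x) + 1) = eps.
    by field; lra.
  nra.
have := f_approx y y_eta; have := Cauchy_Schwarz (g x) (vsub y x).
have := vnorm_ge0 (vsub y x); move: (dot (g x) (vsub y x)) => d; split_Rabs; nra.
Qed.

Lemma continuous_map_const (c : vec n) : continuous_map (fun _ : vec n => c).
Proof.
move=> x eps eps_gt0; exists 1; split=> [|y _]; first lra.
have -> : vsub c c = vscale 0 c by vext.
by rewrite vnorm_scale Rabs_R0 Rmult_0_l.
Qed.

Lemma continuous_map_subr (y : vec n) : continuous_map (fun u => vsub u y).
Proof.
move=> x eps eps_gt0; exists eps; split=> // u.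
by have -> : vsub (vsub u y) (vsub x y) = vsub u x by vext.
Qed.

Lemma continuous_map_subl (y : vec n) : continuous_map (fun u => vsub y u).
Proof.
move=> x eps eps_gt0; exists eps; split=> // u.
have -> : vsub (vsub y u) (vsub y x) = vsub x u by vext.
by rewrite vnorm_subC.
Qed.

Lemma dot_continuous_at (G H : vec n -> vec n) x : continuous_map G -> continuous_map H ->
  vcontinuous_at (fun u => dot (G u) (H u)) x.
Proof.
move=> G_cont H_cont eps eps_gt0.
have Gx_ge0 := vnorm_ge0 (G x); have Hx_ge0 := vnorm_ge0 (H x).
have e1_gt0 : 0 < eps / 2 / (vnorm (H x) + 1) by apply: Rdiv_lt_0_compat; lra.
have e2_gt0 : 0 < Rmin 1 (eps / 2 / (vnorm (G x) + 1)).
  by apply: Rmin_glb_lt; [lra | apply: Rdiv_lt_0_compat; lra].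
have [eta1 [eta1_gt0 G_close]] := G_cont x _ e1_gt0.
have [eta2 [eta2_gt0 H_close]] := H_cont x _ e2_gt0.
exists (Rmin eta1 eta2); split; first exact: Rmin_glb_lt.
move=> u /Rmin_Rgt_l [u_eta1 u_eta2].
have /Rmin_Rgt_l [dH_lt1 dH_lt] := H_close u u_eta2; have dG_lt := G_close u u_eta1.
have -> : dot (G u) (H u) - dot (G x) (H x) =
    dot (vsub (G u) (G x)) (H u) + dot (G x) (vsub (H u) (H x)).
  by rewrite dot_subl dot_subr; ring.
have Hu_le : vnorm (H u) <= vnorm (H x) + 1.
  have := vnorm_add_le (H x) (vsub (H u) (H x)).
  have -> : vadd (H x) (vsub (H u) (H x)) = H u by vext.
  lra.
have term1 : Rabs (dot (vsub (G u) (G x)) (H u)) < eps / 2.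
  apply: Rle_lt_trans (Cauchy_Schwarz _ _) _.
  apply: Rle_lt_trans (Rmult_le_compat_l _ _ _ (vnorm_ge0 _) Hu_le) _.
  have <- : eps / 2 / (vnorm (H x) + 1) * (vnorm (H x) + 1) = eps / 2 by field; lra.
  by apply: Rmult_lt_compat_r; lra.
have term2 : Rabs (dot (G x) (vsub (H u) (H x))) < eps / 2.
  apply: Rle_lt_trans (Cauchy_Schwarz _ _) _.
  have <- : (vnorm (G x) + 1) * (eps / 2 / (vnorm (G x) + 1)) = eps / 2 by field; lra.
  by have := vnorm_ge0 (vsub (H u) (H x)); nra.
by have := Rabs_triang (dot (vsub (G u) (G x)) (H u)) (dot (G x) (vsub (H u) (H x))); lra.
Qed.

Theorem continuous_map_uniform D (G : vec n -> vec n) :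
  closed_vset D -> bounded_vset D -> continuous_map G ->
  forall eps, 0 < eps -> exists eta, 0 < eta /\ forall x y, D x -> D y ->
    vnorm (vsub y x) < eta -> vnorm (vsub (G y) (G x)) < eps.
Proof.
move=> D_closed D_bd G_cont eps eps_gt0; apply: NNPP => not_unif.
pose bad k (xy : vec n * vec n) := [/\ D xy.1, D xy.2,
  vnorm (vsub xy.2 xy.1) < / (INR k + 1) & eps <= vnorm (vsub (G xy.2) (G xy.1))].
have [s sP] : exists s, forall k, bad k (s k).
  apply: (ClassicalEpsilon.choice bad) => k; apply: NNPP => no_pair; apply: not_unif.
  exists (/ (INR k + 1)); split; first by apply: Rinv_0_lt_compat; have := pos_INR k; lra.
  move=> x y Dx Dy xy_close; apply: Rnot_le_lt => G_far.
  by apply: no_pair; exists (x, y).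
have [z [Dz z_lim]] := compact_limit_point D (fun k => (s k).1) D_closed D_bd
  (fun k => let: And4 Dx _ _ _ := sP k in Dx).
have [eta [eta_gt0 G_close]] := G_cont z (eps / 2) ltac:(lra).
have [N HN] := inv_INR_succ_lt (eta / 2) ltac:(lra).
have [p [Np sp_close]] := z_lim (eta / 2) ltac:(lra) N.
have [_ _ sp_near sp_far] := sP p; have := HN p Np => inv_lt.
have s1_close : vnorm (vsub (s p).1 z) < eta by lra.
have s2_close : vnorm (vsub (s p).2 z) < eta.
  by have := vnorm_sub_triangle (s p).2 (s p).1 z; lra.
have := vnorm_sub_triangle (G (s p).2) (G z) (G (s p).1).
have := G_close _ s1_close; have := G_close _ s2_close.
by rewrite (vnorm_subC (G z)); lra.
Qed.
End Continuity.

Section SegmentCalculus.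
Context {n : nat} (f : vec n -> R) (g : vec n -> vec n).
Hypothesis f_grad : has_gradient f g.

Lemma derivable_pt_lim_on_line x d t :
  derivable_pt_lim (fun s => f (vadd x (vscale s d))) t (dot (g (vadd x (vscale t d))) d).
Proof.
move=> eps eps_gt0; set y := vadd x (vscale t d).
have d_ge0 := vnorm_ge0 d.
pose e := eps / 2 / (vnorm d + 1).
have e_gt0 : 0 < e by apply: Rdiv_lt_0_compat; lra.
have [eta [eta_gt0 f_approx]] := f_grad y e e_gt0.
have delta_gt0 : 0 < eta / (vnorm d + 1) by apply: Rdiv_lt_0_compat; lra.
exists (mkposreal _ delta_gt0) => h h_neq0 /= h_small.
have step : vsub (vadd x (vscale (t + h) d)) y = vscale h d by rewrite /y; vext.
have h_pos : 0 < Rabs h by apply: Rabs_pos_lt.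
have h_eta : vnorm (vscale h d) < eta.
  rewrite vnorm_scale; have : eta / (vnorm d + 1) * (vnorm d + 1) = eta by field; lra.
  nra.
have := f_approx _ (eq_ind_r (fun v => vnorm v < eta) h_eta step).
rewrite step dot_scaler vnorm_scale => approx.
have -> : (f (vadd x (vscale (t + h) d)) - f y) / h - dot (g y) d =
    (f (vadd x (vscale (t + h) d)) - f y - h * dot (g y) d) / h by field.
rewrite /Rdiv Rabs_mult Rabs_inv; apply: (Rle_lt_trans _ (e * vnorm d)).
  apply: (Rmult_le_reg_r (Rabs h)) => //.
  by rewrite Rmult_assoc Rinv_l; nra.
have : e * (vnorm d + 1) = eps / 2 by rewrite /e; field; lra.
nra.
Qed.

Lemma mean_value_on_segment x d t : 0 < t -> exists c, 0 < c < t /\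
  f (vadd x (vscale t d)) - f x = t * dot (g (vadd x (vscale c d))) d.
Proof.
move=> t_gt0; pose phi s := f (vadd x (vscale s d)).
have [c [phi_mvt c_in]] := MVT_cor1 phi 0 t
  (fun s => exist _ _ (derivable_pt_lim_on_line x d s)) t_gt0.
exists c; split=> //; move: phi_mvt; rewrite /phi /derive_pt /=.
have -> : vadd x (vscale 0 d) = x by vext.
by move=> ->; ring.
Qed.
End SegmentCalculus.

Lemma pow_in_01 (th : R) m : 0 < th < 1 -> 0 < th ^ m <= 1.
Proof. by move=> th_01; elim: m => [|m IH] /=; nra. Qed.

Section CGMI.
Context {n : nat} {D : vec n -> Prop} {f : vec n -> R} {g : vec n -> vec n} {beta theta : R}.
Hypotheses (D_nonempty : exists x, D x) (D_convex : convex_vset D).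
Hypotheses (D_closed : closed_vset D) (D_bounded : bounded_vset D).
Hypotheses (f_C1 : C1_with_gradient f g) (beta_01 : 0 < beta < 1) (theta_01 : 0 < theta < 1).

(* The step [t] works uniformly: by the mean value theorem the Armijo test only fails
   where [g] varies by more than [(1 - beta) delta / diam D], which uniform continuity
   of [g] on the compact [D] rules out for short steps. *)
Lemma armijo_uniform_step delta : 0 < delta -> exists tau, 0 < tau <= 1 /\
  forall x z t, D x -> D z -> delta <= dot (g x) (vsub x z) -> 0 < t <= tau ->
    f (vadd x (vscale t (vsub z x))) <= f x + beta * t * dot (g x) (vsub z x).
Proof.
move=> delta_gt0; have [K [K_gt0 D_diam]] := bounded_diameter D D_bounded.
pose eps := (1 - beta) * delta / K.
have eps_gt0 : 0 < eps by apply: Rdiv_lt_0_compat; nra.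
have [eta [eta_gt0 g_unif]] :=
  continuous_map_uniform D g D_closed D_bounded f_C1.2 eps eps_gt0.
have etaK_gt0 : 0 < eta / K by apply: Rdiv_lt_0_compat.
exists (Rmin 1 (eta / K)); split=> [|x z t Dx Dz descent [t_gt0 t_le_min]].
  by split; [apply: Rmin_glb_lt; lra | apply: Rmin_l].
have t_le1 := Rle_trans _ _ _ t_le_min (Rmin_l _ _).
have t_le := Rle_trans _ _ _ t_le_min (Rmin_r _ _).
set d := vsub z x; have d_le : vnorm d <= K := D_diam x z Dx Dz; have d_ge0 := vnorm_ge0 d.
have [c [[c_gt0 c_lt] mvt]] := mean_value_on_segment f g f_C1.1 x d t t_gt0.
set xc := vadd x (vscale c d) in mvt.
have Dxc : D xc by apply: D_convex => //; lra.
have xc_close : vnorm (vsub xc x) < eta.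
  have -> : vsub xc x = vscale c d by rewrite /xc; vext.
  rewrite vnorm_scale Rabs_pos_eq; last lra.
  have : eta / K * K = eta by field; lra.
  have := Rmult_le_compat_l c _ _ (Rlt_le _ _ c_gt0) d_le.
  have := Rmult_le_compat_r K _ _ (Rlt_le _ _ K_gt0) t_le.
  nra.
have g_var : dot (vsub (g xc) (g x)) d <= (1 - beta) * delta.
  apply: Rle_trans (dot_le_vnorm _ _) _.
  have : eps * K = (1 - beta) * delta by rewrite /eps; field; lra.
  have := g_unif x xc Dx Dxc xc_close; have := vnorm_ge0 (vsub (g xc) (g x)); nra.
have gd : dot (g x) d <= - delta by rewrite /d dot_subr; move: descent; rewrite dot_subr; lra.
have : dot (g xc) d = dot (g x) d + dot (vsub (g xc) (g x)) d by rewrite dot_subl; ring.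
have : 0 <= t * (1 - beta) by nra.
nra.
Qed.

Lemma mu_is_max x : is_max_of D g x (mu D g x).
Proof.
apply: epsilon_spec.
have [ym [Dym ym_max]] := extreme_value D (fun y => dot (g x) (vsub x y)) D_nonempty
  D_closed D_bounded (fun y _ => dot_continuous_at _ _ y
    (continuous_map_const (g x)) (continuous_map_subl x)).
by exists (dot (g x) (vsub x ym)); split=> //; exists ym.
Qed.

Lemma f_bounded_below : exists L, forall x, D x -> L <= f x.
Proof.
have [xm [_ xm_max]] : exists xm, D xm /\ forall y, D y -> - f y <= - f xm.
  apply: extreme_value => // x _ eps eps_gt0.
  have [eta [eta_gt0 f_close]] := has_gradient_continuous_at f g x f_C1.1 eps eps_gt0.
  by exists eta; split=> // y /f_close; rewrite -Rabs_Ropp; congr (Rabs _ < _); ring.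
by exists (f xm) => x /xm_max; lra.
Qed.

Lemma cgmi_step_in_D delta x x' : D x -> cgmi_step D f g beta theta delta x x' -> D x'.
Proof.
move=> Dx [_ [z [Dz [_ [m [_ [_ ->]]]]]]].
by apply: D_convex => //; have := pow_in_01 theta m theta_01; lra.
Qed.

(* The minimal Armijo exponent [m] satisfies [theta ^ m > theta * tau], hence every
   step lowers [f] by at least [beta * theta * tau * delta]. *)
Lemma cgmi_step_decrease delta : 0 < delta -> exists c, 0 < c /\
  forall x x', D x -> cgmi_step D f g beta theta delta x x' -> f x' <= f x - c.
Proof.
move=> delta_gt0; have [tau [tau_01 armijo_tau]] := armijo_uniform_step delta delta_gt0.
exists (beta * theta * tau * delta); split.
  by apply: Rmult_lt_0_compat => //; apply: Rmult_lt_0_compat; [nra | lra].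
move=> x x' Dx [_ [z [Dz [descent [m [armijo_m [m_min ->]]]]]]].
have theta_m : theta * tau <= theta ^ m.
  case: m armijo_m m_min => [|m] _ m_min /=; first by nra.
  suff : tau < theta ^ m by nra.
  apply: Rnot_le_lt => theta_m_le; apply: (m_min m); first lia.
  by apply: armijo_tau => //; have := pow_in_01 theta m theta_01; lra.
move: armijo_m; rewrite /armijo !dot_subr; move: descent; rewrite dot_subr => descent.
have : beta * (theta * tau) * delta <= beta * theta ^ m * (dot (g x) x - dot (g x) z).
  apply: Rmult_le_compat; try lra.
    by apply: Rmult_le_pos; [lra | apply: Rmult_le_pos; lra].
  exact: Rmult_le_compat_l (Rlt_le _ _ beta_01.1) theta_m.
lra.
Qed.

Lemma cgmi_step_exists delta x : 0 < delta -> D x -> delta <= mu D g x ->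
  exists x', cgmi_step D f g beta theta delta x x'.
Proof.
move=> delta_gt0 Dx delta_le.
have [[z [Dz mu_z]] _] := mu_is_max x.
have [tau [[tau_gt0 _] armijo_tau]] := armijo_uniform_step delta delta_gt0.
have [N theta_N] : exists N, theta ^ N <= tau.
  have [N HN] := pow_lt_1_zero theta ltac:(rewrite Rabs_pos_eq; lra) tau tau_gt0.
  by exists N; have := HN N (le_n N); rewrite Rabs_pos_eq; [lra | apply: pow_le; lra].
have armijo_N : armijo f g beta theta x (vsub z x) N.
  by apply: armijo_tau => //; [lra | have := pow_in_01 theta N theta_01; lra].
have [m [[armijo_m m_least] _]] := dec_inh_nat_subset_has_unique_least_element
  (armijo f g beta theta x (vsub z x)) (fun m => classic _) (ex_intro _ N armijo_N).
exists (vadd x (vscale (theta ^ m) (vsub z x))); split=> //.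
exists z; split=> //; split; first lra.
by exists m; split=> //; split=> // m' m'_lt /m_least; lia.
Qed.

Lemma cgmi_no_infinite_stage delta : 0 < delta -> forall x0, D x0 ->
  ~ exists xs : nat -> vec n, xs O = x0 /\
      forall k, cgmi_step D f g beta theta delta (xs k) (xs k.+1).
Proof.
move=> delta_gt0 x0 Dx0 [xs [xs0 xs_steps]].
have [c [c_gt0 decrease]] := cgmi_step_decrease delta delta_gt0.
have xsD k : D (xs k).
  by elim: k => [|k IH]; [rewrite xs0 | apply: cgmi_step_in_D IH (xs_steps k)].
have f_xs k : f (xs k) <= f x0 - INR k * c.
  elim: k => [|k IH]; first by rewrite xs0 /=; lra.
  by have := decrease _ _ (xsD k) (xs_steps k); rewrite S_INR; lra.
have [L f_ge_L] := f_bounded_below.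
have [N N_gt] := INR_archimed c (f x0 - L) c_gt0.
by have := f_xs N; have := f_ge_L _ (xsD N); lra.
Qed.

(* If no stage started at [x] ended, a step from [x] would again reach such a point,
   giving an infinite stage. *)
Lemma cgmi_stage_exists delta : 0 < delta -> forall x0, D x0 ->
  exists y, cgmi_stage D f g beta theta delta x0 y.
Proof.
move=> delta_gt0 x0 Dx0; apply: NNPP => no_stage.
pose endless x := D x /\ ~ exists y, cgmi_stage D f g beta theta delta x y.
have endless_step x : endless x ->
    exists x', endless x' /\ cgmi_step D f g beta theta delta x x'.
  move=> [Dx no_end].
  have mu_ge : delta <= mu D g x.
    apply: Rnot_lt_le => mu_lt; apply: no_end; exists x, O, (fun _ => x).
    by split=> //; split=> //; split=> // k; lia.
  have [x' step] := cgmi_step_exists delta x delta_gt0 Dx mu_ge.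
  exists x'; split=> //; split; first exact: cgmi_step_in_D Dx step.
  move=> [y [K [xs [xs0 [xsK [xs_steps mu_y]]]]]]; apply: no_end; exists y.
  exists K.+1, (fun k => if k is k'.+1 then xs k' else x); split=> //; split=> //.
  by split=> // -[|k] k_lt /=; [rewrite xs0 | apply: xs_steps; lia].
have [next nextP] : exists next : vec n -> vec n, forall x, endless x ->
    endless (next x) /\ cgmi_step D f g beta theta delta x (next x).
  apply: (ClassicalEpsilon.choice (fun x x' => endless x ->
    endless x' /\ cgmi_step D f g beta theta delta x x')) => x.
  have [endless_x | not_endless_x] := classic (endless x).
    by have [x' ?] := endless_step x endless_x; exists x'.
  by exists x.
have run_endless k : endless (iter k next x0).
  by elim: k => [|k IH] /=; [split | exact: (nextP _ IH).1].
apply: (cgmi_no_infinite_stage delta delta_gt0 x0 Dx0).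
by exists (fun k => iter k next x0); split=> // k; exact: (nextP _ (run_endless k)).2.
Qed.

Lemma cgmi_stage_end delta x y : 0 < delta -> D x ->
  cgmi_stage D f g beta theta delta x y -> [/\ D y, f y <= f x & mu D g y < delta].
Proof.
move=> delta_gt0 Dx [K [xs [xs0 [xsK [xs_steps mu_y]]]]].
have [c [c_gt0 decrease]] := cgmi_step_decrease delta delta_gt0.
have run k : (k <= K)%coq_nat -> D (xs k) /\ f (xs k) <= f x.
  elim: k => [|k IH] k_le; first by rewrite xs0; split=> //; lra.
  have [Dxk f_xk] := IH ltac:(lia); have step := xs_steps k ltac:(lia).
  by split; [apply: cgmi_step_in_D Dxk step | have := decrease _ _ Dxk step; lra].
by have [] := run K (le_n K); rewrite xsK.
Qed.

(* If [a := <g x, x - y> > 0], continuity keeps [<g u, u - y> > a / 2] at iterates [u]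
   near [x], contradicting [<g u, u - y> <= mu u < delta p -> 0]. *)
Lemma cgmi_limit_point_stationary (w : nat -> vec n) (delta : nat -> R) x :
  (forall p, D (w p)) -> (forall p, mu D g (w p.+1) < delta p) -> Un_cv delta 0 ->
  limit_point w x -> D0 D g x.
Proof.
move=> wD mu_w delta_cv0 x_lim; split; first exact: closed_limit_point D_closed wD x_lim.
move=> y Dy; apply: Rnot_lt_le => descent.
pose a := dot (g x) (vsub x y).
have a_gt0 : 0 < a by move: descent; rewrite /a !dot_subr; lra.
have [N delta_small] := delta_cv0 (a / 2) ltac:(lra).
have [[|p] [Np wp_close]] := limit_point_continuous_at _ w x
  (dot_continuous_at g _ x f_C1.2 (continuous_map_subr y)) x_lim (a / 2) ltac:(lra) N.+1.
  by lia.
have := delta_small p ltac:(lia); have := mu_w p; have := (mu_is_max (w p.+1)).2 y Dy.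
by move: wp_close; rewrite /R_dist -/a; split_Rabs; lra.
Qed.
End CGMI.

Theorem theorem4p1 (n : nat) (D : vec n -> Prop) (f : vec n -> R)
    (g : vec n -> vec n) (beta theta : R) (delta : nat -> R)
    (HDne : exists x, D x) (HDconv : convex_vset D) (HDcl : closed_vset D)
    (HDbd : bounded_vset D) (Hf : C1_with_gradient f g)
    (Hbeta : 0 < beta < 1) (Htheta : 0 < theta < 1)
    (Hdelta_pos : forall p, 0 < delta p) (Hdelta_lim : Un_cv delta 0) :
  (forall p x0, D x0 ->
     ~ (exists xs : nat -> vec n, xs O = x0 /\
          forall k, cgmi_step D f g beta theta (delta p) (xs k) (xs (S k)))) /\
  (forall p x0, D x0 -> exists y, cgmi_stage D f g beta theta (delta p) x0 y) /\
  (forall w : nat -> vec n,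
     D (w O) ->
     (forall p, cgmi_stage D f g beta theta (delta p) (w p) (w (S p))) ->
     ((exists x, limit_point w x) /\
      (forall x, limit_point w x -> D0 D g x)) /\
     (pseudo_convex_on D f g ->
        (forall x, limit_point w x -> Dstar D f x) /\
        (forall fstar, is_inf_on D f fstar -> Un_cv (fun p => f (w p)) fstar))).
Proof.
split=> [p | ].
  exact: cgmi_no_infinite_stage HDne HDconv HDcl HDbd Hf Hbeta Htheta _ (Hdelta_pos p).
split=> [p | w Dw0 w_stages].
  exact: cgmi_stage_exists HDne HDconv HDcl HDbd Hf Hbeta Htheta _ (Hdelta_pos p).
have stage_end p : D (w p) ->
    [/\ D (w p.+1), f (w p.+1) <= f (w p) & mu D g (w p.+1) < delta p].
  exact: (cgmi_stage_end HDconv HDcl HDbd Hf Hbeta Htheta _ _ _ (Hdelta_pos p) ^~ (w_stages p)).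
have wD p : D (w p) by elim: p => [|p /stage_end []].
have [xl [_ xl_lim]] := compact_limit_point D w HDcl HDbd wD.
have stationary x : limit_point w x -> D0 D g x.
  exact: cgmi_limit_point_stationary HDne HDcl HDbd Hf w delta x wD
    (fun p => let: And3 _ _ mu_lt := stage_end p (wD p) in mu_lt) Hdelta_lim.
split; first by split; [exists xl | exact: stationary].
move=> f_pcvx; have minimizer x : limit_point w x -> Dstar D f x.
  by move=> /stationary [Dx x_stat]; split=> // y Dy; apply: f_pcvx (x_stat y Dy).
split=> // fstar [fstar_lb fstar_glb].
have [Dxl xl_min] := minimizer xl xl_lim.
have -> : fstar = f xl by apply: Rle_antisym; [exact: fstar_lb Dxl | exact: fstar_glb xl_min].
apply: nonincreasing_cluster_value_cv => [p | p | eps eps_gt0].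
- by have [] := stage_end p (wD p).
- exact: xl_min.
have [p [_ wp_close]] := limit_point_continuous_at f w xl
  (has_gradient_continuous_at f g xl Hf.1) xl_lim eps eps_gt0 O.
by exists p.
Qed.
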